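(* Let $B\subset A$ be Hausdorff compact spaces with $B$ closed in $A$, let $G$ be an abelian group and $n\ge1$, and suppose $\gamma\in H_{n-1}(B;G)$ is nontrivial and $i^{n-1}_{B,A}(\gamma)=0$. Then there exists a closed set $K\subset A$ containing $B$ such that $K$ is an $(n-1)$-homology membrane for $\gamma$ spanned on $B$.
   Context: $H_k(\cdot;G)$ is Čech homology (defined via nerves of finite open covers); $i^k_{B,K}$ is induced by inclusion. For closed $B\subset K$, $K$ is an $(n-1)$-homology membrane spanned on $B$ for $\gamma\in H_{n-1}(B;G)$ if $i^{n-1}_{B,K}(\gamma)=0$ but $i^{n-1}_{B,K'}(\gamma)\ne0$ for every proper closed subset $K'\subsetneq K$ containing $B$. *)

From HB Require Import structures.
From mathcomp Require Import all_boot all_order all_algebra.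
Set Implicit Arguments. Unset Strict Implicit. Unset Printing Implicit Defensive.
Import GRing.Theory.
Local Open Scope ring_scope.

Record topology (X : Type) : Type := Topology {
  is_open : (X -> Prop) -> Prop;
  open_setT : is_open (fun _ => True);
  open_setI : forall U V, is_open U -> is_open V -> is_open (fun x => U x /\ V x);
  open_bigU : forall F : (X -> Prop) -> Prop,
      (forall U, F U -> is_open U) -> is_open (fun x => exists2 U, F U & U x) }.
Arguments is_open {X}.

Definition subset (X : Type) (A B : X -> Prop) := forall x, A x -> B x.

Definition is_closed (X : Type) (T : topology X) (C : X -> Prop) :=
  is_open T (fun x => ~ C x).

(* i-th member of a finite indexed family of sets (empty set out of range) *)
Definition nthset (X : Type) (U : seq (X -> Prop)) (i : nat) : X -> Prop :=
  nth (fun _ => False) U i.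

Definition compact_space (X : Type) (T : topology X) :=
  forall F : (X -> Prop) -> Prop, (forall U, F U -> is_open T U) ->
  (forall x, exists2 U, F U & U x) ->
  exists l : seq (X -> Prop), (forall i, (i < size l)%N -> F (nthset l i)) /\
    forall x, exists2 i, (i < size l)%N & nthset l i x.

Definition hausdorff_space (X : Type) (T : topology X) :=
  forall x y : X, x <> y -> exists U V, [/\ is_open T U, is_open T V, U x, V y &
    forall z, ~ (U z /\ V z)].

(* ---------- Finite open covers of a subspace S and their nerves ----------
   A finite open cover of the subspace S is a finite indexed family of open
   sets of the ambient space whose union contains S (its traces on S are the
   open sets of S; every finite open cover of S arises this way). *)
Definition open_cover (X : Type) (T : topology X) (S : X -> Prop)
    (U : seq (X -> Prop)) :=
  (forall i, (i < size U)%N -> is_open T (nthset U i)) /\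
  forall x, S x -> exists2 i, (i < size U)%N & nthset U i x.

(* ordered simplex (vertices may repeat) of the nerve of U relative to S *)
Definition nerve_simplex (X : Type) (S : X -> Prop) (U : seq (X -> Prop))
    (s : seq nat) :=
  all (fun i => (i < size U)%N) s /\
  exists2 x, S x & forall i, i \in s -> nthset U i x.

(* k-chains with coefficients in G (finitely supported automatically) *)
Definition chain (X : Type) (G : zmodType) (S : X -> Prop) (U : seq (X -> Prop))
    (k : nat) (c : seq nat -> G) :=
  forall s, c s != 0 -> size s = k.+1 /\ nerve_simplex S U s.

(* boundary: (bd c)(t) = sum_i (-1)^i sum_{s : d_i s = t} c s ; zero in degree -1 *)
Definition bd (G : zmodType) (m : nat) (c : seq nat -> G) : seq nat -> G :=
  fun t => if t is [::] then 0 else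
    \sum_(i < (size t).+1) \sum_(v < m)
       (if odd i then - c (take i t ++ (nat_of_ord v) :: drop i t)
        else c (take i t ++ (nat_of_ord v) :: drop i t)).

Definition cycle (X : Type) (G : zmodType) (S : X -> Prop) (U : seq (X -> Prop))
    (k : nat) (c : seq nat -> G) :=
  chain S U k c /\ forall t, bd (size U) c t = 0.

Definition boundary (X : Type) (G : zmodType) (S : X -> Prop) (U : seq (X -> Prop))
    (k : nat) (c : seq nat -> G) :=
  exists2 d : seq nat -> G, chain S U k.+1 d & forall t, c t = bd (size U) d t.

Definition refines (X : Type) (S : X -> Prop) (V U : seq (X -> Prop))
    (pi : nat -> nat) :=
  forall j, (j < size V)%N ->
    (pi j < size U)%N /\ forall x, S x -> nthset V j x -> nthset U (pi j) x.

Definition push (G : zmodType) (mV : nat) (pi : nat -> nat) (c : seq nat -> G)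
    : seq nat -> G :=
  fun t => \sum_(s : (size t).-tuple 'I_mV | map pi (map (@nat_of_ord mV) s) == t)
             c (map (@nat_of_ord mV) s).

(* ---------- Čech homology ----------
   An element of H_k(S;G) (inverse limit over finite open covers of the
   simplicial homology of the nerves) is represented by a family gamma of
   k-cycles, one for each finite open cover, compatible up to boundaries
   under all refinement projections. *)
Definition cech_class (X : Type) (T : topology X) (G : zmodType) (S : X -> Prop)
    (k : nat) (gamma : seq (X -> Prop) -> seq nat -> G) :=
  (forall U, open_cover T S U -> cycle S U k (gamma U)) /\
  (forall U V pi, open_cover T S U -> open_cover T S V -> refines S V U pi ->
     boundary S U k (fun t => push (size V) pi (gamma V) t - gamma U t)).

Definition cech_zero (X : Type) (T : topology X) (G : zmodType) (S : X -> Prop)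
    (k : nat) (gamma : seq (X -> Prop) -> seq nat -> G) :=
  forall U, open_cover T S U -> boundary S U k (gamma U).

(* i^k_{B,K}(gamma) = 0 for B ⊆ K: for every finite open cover U of K,
   the cycle gamma U (on the nerve of U|B) bounds in the nerve of U rel. K *)
Definition incl_zero (X : Type) (T : topology X) (G : zmodType)
    (B K : X -> Prop) (k : nat) (gamma : seq (X -> Prop) -> seq nat -> G) :=
  forall U, open_cover T K U -> boundary K U k (gamma U).

Definition homology_membrane (X : Type) (T : topology X) (G : zmodType)
    (B K : X -> Prop) (k : nat) (gamma : seq (X -> Prop) -> seq nat -> G) :=
  [/\ is_closed T K, subset B K, incl_zero T B K k gamma &
   forall K', is_closed T K' -> subset B K' -> subset K' K -> ~ subset K K' ->
     ~ incl_zero T B K' k gamma].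

(* Zorn's lemma, applied to the closed sets K containing B on which gamma dies,
   ordered by reverse inclusion, yields a minimal one, i.e. a membrane; so it
   suffices that gamma still dies on the intersection K of a chain C.  Given a
   finite open cover U of K, compactness and regularity give a shrinking V of U
   and a neighbourhood W of K such that every simplex of the nerve of V over W
   is a simplex of the nerve of U over K.  By compactness some member of C lies
   in W, so gamma V bounds in the nerve of V over W, and the compatibility of
   gamma under the refinement V -> U turns this into a bounding chain of
   gamma U over K. *)

From HB Require Import structures.
From mathcomp Require Import all_boot all_order all_algebra.
From mathcomp Require Import boolp classical_sets.
Import GRing.Theory.
Set Implicit Arguments. Unset Strict Implicit. Unset Printing Implicit Defensive.
Local Open Scope classical_set_scope.

Section Topology.
Variables (X : Type) (T : topology X).

Lemma eq_open (A C : set X) : (forall x, A x <-> C x) -> is_open T A -> is_open T C.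
Proof. by move=> AC; rewrite (_ : A = C) // funeqE => x; apply/propext. Qed.

Lemma open_set0 : is_open T set0.
Proof.
by apply: eq_open (open_bigU (F := set0) (fun _ => False_ind _)) => x; split => // [[]].
Qed.

Lemma open_bigcup (I : Type) (W : I -> set X) :
  (forall i, is_open T (W i)) -> is_open T [set y | exists i, W i y].
Proof.
move=> oW; apply: eq_open (open_bigU (F := [set U | exists i, U = W i]) _).
  by move=> x; split => [[_ [i ->] Wx]|[i Wx]]; [exists i|exists (W i); first exists i].
by move=> _ [i ->].
Qed.

Lemma open_propI (P : Prop) (W : set X) :
  is_open T W -> is_open T [set y | P /\ W y].
Proof.
move=> oW; have [hP|nP] := pselect P.
  by apply: eq_open oW => x; split => // [[]].
by apply: eq_open open_set0 => x; split => // [[]].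
Qed.

Lemma open_propImp (P : Prop) (W : set X) :
  is_open T W -> is_open T [set y | P -> W y].
Proof.
move=> oW; have [hP|nP] := pselect P.
  by apply: eq_open oW => x; split => [Wx _|/(_ hP)].
by apply: eq_open (open_setT T) => x; split => // _ /nP.
Qed.

Lemma open_finbigcap (I : finType) (W : I -> set X) :
  (forall i, is_open T (W i)) -> is_open T [set y | forall i, W i y].
Proof.
move=> oW; suff oWs (s : seq I) : is_open T [set y | forall i, i \in s -> W i y].
  by apply: eq_open (oWs (enum I)) => x; split => Wx i //; apply: Wx; rewrite mem_enum.
elim: s => [|a s IHs].
  by apply: eq_open (open_setT T) => x; split.
apply: eq_open (open_setI (oW a) IHs) => x; split.
  by case=> Wa Ws i; rewrite inE => /orP [/eqP -> //|]; exact: Ws.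
by move=> Wx; split => [|i si]; apply: Wx; rewrite inE ?eqxx ?si ?orbT.
Qed.

Lemma closed_setT : is_closed T setT.
Proof. by apply: eq_open open_set0 => x; split => // /(_ Logic.I). Qed.

Lemma closedC (U : set X) : is_open T U -> is_closed T (~` U).
Proof. by apply: eq_open => x; split => [Ux /(_ Ux)|/contrapT]. Qed.

Lemma closed_bigcap (C : set (set X)) :
  (forall K, C K -> is_closed T K) -> is_closed T (\bigcap_(K in C) K).
Proof.
move=> cC; apply: eq_open (open_bigU (F := [set ~` K | K in C]) _).
  move=> x; split => [[_ [K CK <-] nKx] CKx|]; first exact: nKx (CKx K CK).
  by move=> /existsNP [K /not_implyP [CK nKx]]; exists (~` K) => //; exists K.
by move=> _ [K CK <-]; exact: cC.
Qed.

Lemma nerve_stable_nbhd (K : set X) (U : seq (set X)) (V D : nat -> set X) :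
  (forall i, is_open T (V i)) -> (forall i, is_open T (D i)) ->
  (forall i y, ~ (V i y /\ D i y)) -> (forall i, ~` nthset U i `<=` D i) ->
  (forall x, K x -> exists2 i, (i < size U)%N & V i x) ->
  exists W, [/\ is_open T W, K `<=` W,
    forall x, W x -> exists2 i, (i < size U)%N & V i x &
    forall (s : seq nat) x, all (fun i => i < size U)%N s -> W x ->
      (forall i, i \in s -> V i x) ->
      exists2 y, K y & forall i, i \in s -> nthset U i y].
Proof.
move=> oV oD VD UD covK; set n := size U.
pose meetsK (S : {set 'I_n}) := exists2 y, K y & forall i, i \in S -> nthset U i y.
(* W lies, for every S whose U-intersection misses K, in some D i with i in S,
   hence outside the V-intersection over S. *)
exists [set x | (exists i : 'I_n, V i x) /\
  forall S, ~ meetsK S -> exists i, i \in S /\ D i x]; split.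
- apply: open_setI; first exact: open_bigcup.
  apply: open_finbigcap => S; apply: open_propImp; apply: open_bigcup => i.
  exact: open_propI.
- move=> x Kx; split; first by have [i il Vix] := covK x Kx; exists (Ordinal il).
  move=> S nS; apply: contrapT => nD; apply: nS; exists x => // i Si.
  by apply: contrapT => nUx; apply: nD; exists i; split => //; exact: UD.
- by move=> x [[i Vix] _]; exists i.
move=> s x sn [_ WD] Vx.
pose S := [set i : 'I_n | val i \in s]%SET.
have [[y Ky Uy]|nmS] := pselect (meetsK S); last first.
  by have [i [/[!inE] /Vx Vix Dix]] := WD S nmS; case: (VD i x).
exists y => // i si; have il : (i < n)%N := allP sn i si.
by apply: (Uy (Ordinal il)); rewrite inE.
Qed.

End Topology.

Lemma chain_finite_lb (Y : Type) (C : set (set Y)) (K0 : set Y) (k : nat -> set Y)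
    (n : nat) :
  C K0 -> total_on C subset -> (forall i, (i < n)%N -> C (k i)) ->
  exists2 K, C K & forall i, (i < n)%N -> K `<=` k i.
Proof.
move=> CK0 totC; elim: n => [|n IHn] Ck; first by exists K0.
have [K CK Kk] := IHn (fun i lti => Ck i (leqW lti)).
have [Kkn|knK] := totC K (k n) CK (Ck n (ltnSn n)).
  by exists K => // i; rewrite ltnS leq_eqVlt => /predU1P [->|/Kk].
exists (k n); first exact: Ck.
move=> i; rewrite ltnS leq_eqVlt => /predU1P [->|/Kk]; first exact: subset_refl.
exact: subset_trans.
Qed.

Section Compactness.
Variables (X : Type) (T : topology X).
Hypothesis cpt : compact_space T.

Lemma compact_closed_cover (K : set X) (N : X -> set X) :
  is_closed T K -> (forall x, K x -> is_open T (N x) /\ N x x) ->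
  exists (I : finType) (p : I -> X),
    (forall q, K (p q)) /\ forall y, K y -> exists q, N (p q) y.
Proof.
move=> cK oN; have [[x0 Kx0]|nK] := pselect (K !=set0); last first.
  exists void, (fun v : void => match v with end).
  by split => [[]|y Ky]; case: nK; exists y.
pose F W := is_open T W /\ ((exists2 x, K x & W = N x) \/ W `<=` ~` K).
have [W FW|x|l [Fl cov]] := cpt (F := F); first exact: FW.1.
  have [Kx|nKx] := pselect (K x).
    by exists (N x); [split; [exact: (oN x Kx).1|left; exists x]|exact: (oN x Kx).2].
  by exists (~` K) => //; split; [exact: cK|right].
have /choice [p Kp] : forall i, exists x, K x /\
    ((exists2 y, K y & nthset l i = N y) -> nthset l i = N x).
  move=> i; have [[x Kx lN]|nE] := pselect (exists2 y, K y & nthset l i = N y).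
    by exists x; split => // _.
  by exists x0; split => // /nE.
exists 'I_(size l), (fun q : 'I_(size l) => p q); split => [q|y Ky]; first exact: (Kp q).1.
have [i il liy] := cov y; exists (Ordinal il) => /=.
by have [_ [/(Kp i).2 <-|/(_ y liy)]] := Fl i il.
Qed.

Lemma compact_chain_bigcap_sub (C : set (set X)) (W : set X) :
  C !=set0 -> total_on C subset -> (forall K, C K -> is_closed T K) ->
  is_open T W -> \bigcap_(K in C) K `<=` W -> exists2 K, C K & K `<=` W.
Proof.
move=> [K0 CK0] totC cC oW CW.
pose F Z := Z = W \/ exists2 K, C K & Z = ~` K.
have [Z [->|[K CK ->]]|x|l [Fl cov]] := cpt (F := F); [by []|exact: cC| |].
  have [Wx|nWx] := pselect (W x); first by exists W => //; left.
  have /existsNP [K /not_implyP [CK nKx]] : ~ (\bigcap_(K in C) K) x by move/CW.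
  by exists (~` K) => //; right; exists K.
have /choice [k Ck] : forall i, exists K, (i < size l)%N ->
    C K /\ (nthset l i = W \/ nthset l i = ~` K).
  move=> i; have [il|nil] := pselect (i < size l)%N; last first.
    by exists K0 => /nil.
  have [lW|[K CK lK]] := Fl i il; first by exists K0 => _; split => //; left.
  by exists K => _; split => //; right.
have [K CK Kk] := chain_finite_lb CK0 totC (fun i il => (Ck i il).1).
exists K => // y Ky; have [i il liy] := cov y.
by have [_ [lW|lk]] := Ck i il; move: liy; rewrite ?lW ?lk // => /(_ (Kk i il y Ky)).
Qed.

Hypothesis hd : hausdorff_space T.

Lemma compact_hausdorff_regular (U : set X) (x : X) : is_open T U -> U x ->
  exists N M, [/\ is_open T N, is_open T M, N x, ~` U `<=` M &
    forall y, ~ (N y /\ M y)].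
Proof.
move=> oU Ux.
have /choice [f sep] : forall c, exists NM : set X * set X, ~ U c ->
    [/\ is_open T NM.1, is_open T NM.2, NM.1 x, NM.2 c &
      forall z, ~ (NM.1 z /\ NM.2 z)].
  move=> c; have [Uc|nUc] := pselect (U c).
    by exists (setT, setT); case/(_ Uc).
  have xc : x <> c by move=> exc; apply: nUc; rewrite -exc.
  by have [N [M NM]] := hd xc; exists (N, M).
have [I [p [nUp cp]]] := compact_closed_cover (N := fun c => (f c).2) (closedC oU)
  (fun c nUc => let: And5 _ oM _ Mc _ := sep c nUc in conj oM Mc).
exists [set y | forall q, (f (p q)).1 y], [set y | exists q, (f (p q)).2 y]; split.
- by apply: open_finbigcap => q; case: (sep _ (nUp q)).
- by apply: open_bigcup => q; case: (sep _ (nUp q)).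
- by move=> q; case: (sep _ (nUp q)).
- by move=> y /cp.
by move=> y [Ny [q Mqy]]; case: (sep _ (nUp q)) => _ _ _ _; apply; split.
Qed.

Lemma shrink_open_cover (K : set X) (U : seq (set X)) :
  is_closed T K -> open_cover T K U ->
  exists V D : nat -> set X, [/\ forall i, is_open T (V i),
    forall i, is_open T (D i), forall i y, ~ (V i y /\ D i y),
    forall i, ~` nthset U i `<=` D i &
    forall x, K x -> exists2 i, (i < size U)%N & V i x].
Proof.
move=> cK [oU covU].
have /choice [g Ug] : forall x, exists i, K x -> (i < size U)%N /\ nthset U i x.
  move=> x; have [/covU [i il Uix]|nKx] := pselect (K x); first by exists i.
  by exists 0%N.
have /choice [h sep] : forall x, exists NM : set X * set X, K x ->
    [/\ is_open T NM.1, is_open T NM.2, NM.1 x, ~` nthset U (g x) `<=` NM.2 &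
      forall y, ~ (NM.1 y /\ NM.2 y)].
  move=> x; have [Kx|nKx] := pselect (K x); last by exists (setT, setT).
  have [il Uix] := Ug x Kx.
  by have [N [M NM]] := compact_hausdorff_regular (oU _ il) Uix; exists (N, M).
have [I [p [Kp cp]]] := compact_closed_cover (N := fun x => (h x).1) cK
  (fun x Kx => let: And5 oN _ Nx _ _ := sep x Kx in conj oN Nx).
exists (fun i => [set y | exists q, g (p q) = i /\ (h (p q)).1 y]),
  (fun i => [set y | forall q, g (p q) = i -> (h (p q)).2 y]); split.
- by move=> i; apply: open_bigcup => q; apply: open_propI; case: (sep _ (Kp q)).
- by move=> i; apply: open_finbigcap => q; apply: open_propImp; case: (sep _ (Kp q)).
- move=> i y [[q [<- Nqy]] /(_ q erefl) Mqy].
  by case: (sep _ (Kp q)) => _ _ _ _ /(_ y); apply.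
- by move=> i y nUy q gi; case: (sep _ (Kp q)) => _ _ _ + _; apply; rewrite gi.
move=> x /cp [q Nqx]; exists (g (p q)); first exact: (Ug _ (Kp q)).1.
by exists q.
Qed.

Definition shrinking (V U : seq (set X)) :=
  size V = size U /\ forall i, nthset V i `<=` nthset U i.

Lemma nerve_stable_shrinking (K : set X) (U : seq (set X)) :
  is_closed T K -> open_cover T K U ->
  exists2 V, shrinking V U & exists W, [/\ is_open T W, K `<=` W,
    open_cover T W V & forall s, nerve_simplex W V s -> nerve_simplex K U s].
Proof.
move=> cK covU; set n := size U.
have [Vf [Df [oV oD VD UD covK]]] := shrink_open_cover cK covU.
have [W [oW KW covW nerveW]] := nerve_stable_nbhd oV oD VD UD covK.
set V := mkseq Vf n.
have sV : size V = n by rewrite size_mkseq.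
have nthV i : (i < n)%N -> nthset V i = Vf i by move=> il; rewrite /nthset nth_mkseq.
exists V.
  split => // i; have [il|ni] := ltnP i n; last by rewrite /nthset nth_default ?sV.
  by rewrite nthV // => x Vix; apply: contrapT => /UD /(conj Vix) /VD.
exists W; split => //.
  split => [i|x /covW [i il Vix]]; first by rewrite sV => il; rewrite nthV.
  by exists i; rewrite ?sV ?nthV.
move=> s [/[!sV] sn [x Wx Vx]]; split => //; apply: (nerveW s x sn Wx) => i si.
by rewrite -nthV ?(allP sn i si) //; exact: Vx.
Qed.

End Compactness.

Section NerveChains.
Variables (X : Type) (G : zmodType).
Local Open Scope ring_scope.

Lemma nerve_simplexS (S S' : set X) (U : seq (set X)) (s : seq nat) :
  S `<=` S' -> nerve_simplex S U s -> nerve_simplex S' U s.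
Proof. by move=> SS' [sU [x Sx Ux]]; split => //; exists x; first exact: SS'. Qed.

Lemma chain_sub (S S' : set X) (U U' : seq (set X)) (k : nat) (c : seq nat -> G) :
  (forall s, nerve_simplex S U s -> nerve_simplex S' U' s) ->
  chain S U k c -> chain S' U' k c.
Proof. by move=> sub cc s /cc [sz /sub]. Qed.

Lemma chainB (S : set X) (U : seq (set X)) (k : nat) (e f : seq nat -> G) :
  chain S U k e -> chain S U k f -> chain S U k (fun s => e s - f s).
Proof.
move=> ce cf s; have [e0|/ce //] := eqVneq (e s) 0.
by rewrite e0 sub0r oppr_eq0 => /cf.
Qed.

Lemma bdB (m : nat) (e f : seq nat -> G) (t : seq nat) :
  bd m (fun s => e s - f s) t = bd m e t - bd m f t.
Proof.
rewrite /bd; case: t => [|a t]; first by rewrite subr0.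
rewrite -sumrB; apply: eq_bigr => i _; rewrite -sumrB; apply: eq_bigr => v _.
by case: ifP => _; rewrite // opprD.
Qed.

Lemma push_id (m : nat) (c : seq nat -> G) :
  (forall s, c s != 0 -> all (fun i => i < m)%N s) ->
  forall t, push m id c t = c t.
Proof.
move=> cm t; rewrite /push; have [tm|ntm] := boolP (all (fun i => i < m)%N t).
  have [s0 es0] : exists s0 : seq 'I_m, map val s0 = t.
    elim: t tm => [|a t IHt] /=; first by exists [::].
    by case/andP => am /IHt [s0 e]; exists (Ordinal am :: s0); rewrite /= e.
  have sz : size s0 == size t by rewrite -es0 size_map.
  rewrite (big_pred1 (Tuple sz)) /= ?es0 // => s /=; rewrite map_id.
  apply/eqP/eqP => [e|-> //]; apply: val_inj; apply: (inj_map val_inj).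
  by rewrite /= e es0.
rewrite big_pred0; first by have [->|/cm] := eqVneq (c t) 0; rewrite ?(negbTE ntm).
move=> s; rewrite map_id; apply/negbTE/eqP => e.
by move: ntm; rewrite -e; case/negP; apply/allP => i /mapP [j _ ->].
Qed.

End NerveChains.

Lemma shrinking_refines (X : Type) (S : set X) (V U : seq (set X)) :
  shrinking V U -> refines S V U id.
Proof. by move=> [sVU VU] j; rewrite sVU => jU; split => // x _; exact: VU. Qed.

Lemma open_coverS (X : Type) (T : topology X) (S S' : set X) (U : seq (set X)) :
  S `<=` S' -> open_cover T S' U -> open_cover T S U.
Proof. by move=> SS' [oU covU]; split => // x /SS' /covU. Qed.

Lemma cech_boundary_transfer (X : Type) (T : topology X) (G : zmodType)
    (B K K' : set X) (k : nat) (gamma : seq (set X) -> seq nat -> G)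
    (U V : seq (set X)) :
  cech_class T B k gamma -> open_cover T B U -> open_cover T B V ->
  shrinking V U -> B `<=` K ->
  (forall s, nerve_simplex K' V s -> nerve_simplex K U s) ->
  boundary K' V k (gamma V) -> boundary K U k (gamma U).
Proof.
move=> [cyc compat] covU covV VU BK VK' [e ce egV].
have [g cg gU] := compat U V id covU covV (shrinking_refines B VU).
have [Vc _] := cyc V covV.
exists (fun s => e s - g s)%R.
  apply: chainB; first exact: chain_sub VK' ce.
  exact: chain_sub (fun s => nerve_simplexS BK) cg.
move=> t; rewrite bdB -gU push_id; last by move=> s /Vc [_ []].
by rewrite egV VU.1 opprB addrC subrK.
Qed.

Lemma incl_zero_bigcap (X : Type) (T : topology X) (G : zmodType) (B : set X)
    (k : nat) (gamma : seq (set X) -> seq nat -> G) (C : set (set X)) :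
  compact_space T -> hausdorff_space T -> cech_class T B k gamma ->
  C !=set0 -> total_on C subset ->
  (forall K, C K -> [/\ is_closed T K, B `<=` K & incl_zero T B K k gamma]) ->
  incl_zero T B (\bigcap_(K in C) K) k gamma.
Proof.
move=> cpt hd cc neC totC hC U covU.
have cC K : C K -> is_closed T K by case/hC.
have BC : B `<=` \bigcap_(K in C) K by move=> x Bx K /hC [_ BK _]; exact: BK.
have [V VU [W [oW CW covWV nerveWV]]] :=
  nerve_stable_shrinking cpt hd (closed_bigcap cC) covU.
have [Kb CKb KbW] := compact_chain_bigcap_sub cpt neC totC cC oW CW.
have [_ BKb izKb] := hC Kb CKb.
apply: (cech_boundary_transfer (K' := Kb) cc _ _ VU BC).
- exact: open_coverS BC covU.
- exact: open_coverS (subset_trans BKb KbW) covWV.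
- by move=> s /(nerve_simplexS KbW) /nerveWV.
exact/izKb/(open_coverS KbW covWV).
Qed.

Lemma minimal_of_chain_bigcap (Y : Type) (P : set (set Y)) : P setT ->
  (forall C, C `<=` P -> C !=set0 -> total_on C subset -> P (\bigcap_(A in C) A)) ->
  exists2 A, P A & forall A', A' `<` A -> ~ P A'.
Proof.
move=> PT Pcap.
have [|A [PA maxA]] := @Zorn_bigcup Y [set A | P (~` A)].
  move=> F FP totF; have [[A0 FA0]|nF] := pselect (F !=set0); last first.
    suff -> : \bigcup_(A in F) A = set0 by rewrite /= setC0.
    by rewrite -subset0 => x [A FA _]; case: nF; exists A.
  rewrite /= setC_bigcup -(bigcap_image _ setC id); apply: Pcap.
  - by move=> _ [A FA <-]; exact: FP.
  - by exists (~` A0), A0.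
  move=> _ _ [A FA <-] [A' FA' <-].
  by have [AA'|A'A] := totF A A' FA FA'; [right|left]; exact: subsetC.
exists (~` A) => // A' [A'A nAA'] PA'.
apply: (maxA (~` A')); last by rewrite /= setCK.
split; first exact: subsetCr.
by move=> /subsetCl.
Qed.

Theorem lemma2p6 (X : Type) (T : topology X) (G : zmodType) (B : X -> Prop)
  (n : nat) (gamma : seq (X -> Prop) -> seq nat -> G) :
  compact_space T -> hausdorff_space T -> is_closed T B -> (1 <= n)%N ->
  cech_class T B n.-1 gamma ->
  ~ cech_zero T B n.-1 gamma ->
  incl_zero T B (fun _ => True) n.-1 gamma ->
  exists K : X -> Prop, homology_membrane T B K n.-1 gamma.
Proof.
move=> cpt hd _ _ cc _ izX.
pose P K := [/\ is_closed T K, B `<=` K & incl_zero T B K n.-1 gamma].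
have [|C CP neC totC|K [cK BK izK] minK] := @minimal_of_chain_bigcap X P.
- by split => //; exact: closed_setT.
- split; first by apply: closed_bigcap => K /CP [].
    by move=> x Bx K /CP [_ BK _]; exact: BK.
  exact: incl_zero_bigcap.
exists K; split => // K' cK' BK' K'K KK' izK'.
exact: (minK K' (conj K'K KK') (And3 cK' BK' izK')).
Qed.
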